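(* Let $D_1\supset D_2\supset D_3\supset\cdots$ be closed topological disks in $\mathbb{R}^2$ and let $\varepsilon>0$. Then there exists $N$ such that whenever $n\ge N$ and $U$ is a component of $D_n\setminus D_{n+1}$, $U$ is $\varepsilon$ thin.
   Context: A set $U\subset\mathbb{R}^2$ is $\varepsilon$ thin if for every $x\in U$ the open round disk $B(x,\varepsilon)$ meets $\mathbb{R}^2\setminus U$. *)

(* The plane R^2 is modelled as R * R (product
   topology = usual topology of R^2), for an arbitrary realType R. *)
From HB Require Import structures.
From mathcomp Require Import all_boot all_order all_algebra.
From mathcomp Require Import all_classical all_reals all_analysis.
Set Implicit Arguments. Unset Strict Implicit. Unset Printing Implicit Defensive.
Import Order.TTheory GRing.Theory Num.Theory.
Import numFieldNormedType.Exports.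
Local Open Scope classical_set_scope.
Local Open Scope ring_scope.

Definition sqdist2 {R : realType} (x y : R * R) : R :=
  (x.1 - y.1) ^+ 2 + (x.2 - y.2) ^+ 2.

Definition round_ball {R : realType} (x : R * R) (e : R) : set (R * R) :=
  [set y | sqdist2 x y < e ^+ 2].

Definition unit_closed_disk (R : realType) : set (R * R) :=
  [set y | y.1 ^+ 2 + y.2 ^+ 2 <= 1].

Arguments unit_closed_disk R : clear implicits.

Definition closed_top_disk {R : realType} (D : set (R * R)) : Prop :=
  exists (f g : R * R -> R * R),
    [/\ {within unit_closed_disk R, continuous f},
        {within D, continuous g},
        f @` unit_closed_disk R = D,
        (forall x, unit_closed_disk R x -> g (f x) = x) &
        (forall y, D y -> f (g y) = y)].

Definition thin {R : realType} (e : R) (U : set (R * R)) : Prop :=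
  forall x, U x -> round_ball x e `&` ~` U !=set0.

Definition component_of {R : realType} (A U : set (R * R)) : Prop :=
  exists2 x, A x & U = connected_component A x.

From HB Require Import structures.
From mathcomp Require Import all_boot all_order all_algebra.
From mathcomp Require Import all_classical all_reals all_analysis.
From mathcomp Require Import ring lra.
Import Order.TTheory GRing.Theory Num.Theory.
Import numFieldNormedType.Exports.
Local Open Scope classical_set_scope.
Local Open Scope ring_scope.

(* A point x of D n whose e-ball misses D n.+1 lies in D m for no m > n, and
   every D m with m > n lies in D n.+1; so witnesses of this failure at two
   different levels are at distance at least e.  Such witnesses all lie in the
   compact set D 0, which is covered by finitely many balls of radius e/3; each
   of these balls can host witnesses of a single level only, hence failures
   happen at finitely many levels.  Beyond them, every point x of a component U
   of D n minus D n.+1 has a point of D n.+1 (so outside U) in its e-ball. *)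

Lemma unit_closed_disk_compact (R : realType) : compact (unit_closed_disk R).
Proof.
have cB : compact (`[(-1 : R), 1]%classic `*` `[(-1 : R), 1]%classic).
  by apply: compact_setX; apply: segment_compact.
apply: (subclosed_compact _ cB).
- have -> : unit_closed_disk R =
     (fun y : R * R => y.1 ^+ 2 + y.2 ^+ 2) @^-1` [set x | x <= 1] by [].
  apply: preimage_closed; last exact: closed_le.
  move=> x _; apply: cvgD; rewrite ?expr2; apply: cvgM.
  - exact: (@cvg_fst _ _ (nbhs x.1) (nbhs x.2) _).
  - exact: (@cvg_fst _ _ (nbhs x.1) (nbhs x.2) _).
  - exact: (@cvg_snd _ _ (nbhs x.1) (nbhs x.2) _).
  - exact: (@cvg_snd _ _ (nbhs x.1) (nbhs x.2) _).
- move=> y; rewrite /unit_closed_disk /= => y_in; split => /=; rewrite in_itv /=;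
  apply/andP; split; nra.
Qed.

Lemma closed_top_disk_compact {R : realType} {D : set (R * R)} :
  closed_top_disk D -> compact D.
Proof.
move=> [f [g [fc _ <- _ _]]].
exact: continuous_compact fc (unit_closed_disk_compact R).
Qed.

Lemma ball_sub_round_ball {R : realType} {c x y : R * R} {d : R} :
  ball c d x -> ball c d y -> round_ball x (3 * d) y.
Proof.
have close (a b b' : R) : ball a d b -> ball a d b' -> (b - b') ^+ 2 < 4 * d ^+ 2.
  by rewrite -!ball_normE /= !ltr_norml => /andP[? ?] /andP[? ?]; nra.
move=> [cx1 cx2] [cy1 cy2]; rewrite /round_ball /sqdist2 /=.
have := close _ _ _ cx1 cy1; have := close _ _ _ cx2 cy2.
have -> : (3 * d) ^+ 2 = 9 * d ^+ 2 by ring.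
by have := sqr_ge0 d; lra.
Qed.

Lemma eventually_empty_of_finite_cover (T : eqType) (s : seq T)
    (P : nat -> Prop) (host : T -> nat -> Prop) :
  (forall n, P n -> exists2 c, c \in s & host c n) ->
  (forall c n m, host c n -> host c m -> n = m) ->
  exists N, forall n, (N <= n)%N -> ~ P n.
Proof.
elim: s P => [|c s IH] P cover host_uniq.
  by exists 0%N => n _ /cover[].
have [N HN] : exists N, forall n, (N <= n)%N -> ~ (P n /\ ~ host c n).
  apply: IH => // n [/cover[c' + host_c'] not_host_c].
  by rewrite inE => /orP[/eqP c'c|]; [rewrite c'c in host_c'|exists c'].
case: (pselect (exists n0, host c n0)) => [[n0 host_n0]|no_host].
  exists (maxn N n0.+1) => n; rewrite geq_max => /andP[Nn n0n] Pn.
  apply: (HN n Nn); split=> // /(host_uniq _ _ _ host_n0) eq_n.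
  by rewrite eq_n ltnn in n0n.
by exists N => n Nn Pn; apply: (HN n Nn); split=> // host_n; apply: no_host; exists n.
Qed.

(* compact_cover needs a pointed topological type, and R * R is not
   canonically one: this alias carries both structures. *)
Definition plane (R : realType) := (R * R)%type.
HB.instance Definition _ (R : realType) := Topological.copy (plane R) (R * R)%type.
HB.instance Definition _ (R : realType) := Pointed.copy (plane R) (R * R)%type.

Lemma compact_separated_levels {R : realType} {K : set (R * R)} {e : R}
    {S : nat -> set (R * R)} :
  compact K -> 0 < e -> (forall n, S n `<=` K) ->
  (forall n m x y, (n < m)%N -> S n x -> S m y -> ~ round_ball x e y) ->
  exists N, forall n, (N <= n)%N -> S n = set0.
Proof.
move=> cK e_gt0 SK separated.
pose d := e / 3.
have d_gt0 : 0 < d by rewrite divr_gt0.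
have [C _ covC] : finite_subset_cover K (fun c : R * R => ball c d) K.
  have : cover_compact (K : set (plane R)) by rewrite -compact_cover.
  apply=> [c _|x Kx]; first exact: ball_open.
  by exists x => //; exact: ballxx.
suff [N HN] : exists N, forall n, (N <= n)%N -> ~ (S n !=set0).
  by exists N => n Nn; apply/seteqP; split=> // x Snx; apply: (HN n Nn); exists x.
apply: (@eventually_empty_of_finite_cover _ (finmap.enum_fset C) _
  (fun c n => exists2 x, S n x & ball c d x)).
- by move=> n [x Snx]; have [c Cc cx] := covC x (SK n x Snx); exists c => //; exists x.
- have e_3d : e = 3 * d by rewrite /d mulrC divfK ?pnatr_eq0.
  move=> c n m [x Snx cx] [y Smy cy].
  have [nm|mn|//] := ltngtP n m; exfalso.
  + by apply: separated nm Snx Smy _; rewrite e_3d; exact: ball_sub_round_ball cx cy.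
  + by apply: separated mn Smy Snx _; rewrite e_3d; exact: ball_sub_round_ball cy cx.
Qed.

Theorem mainTheorem19 (R : realType) (D : nat -> set (R * R)) (e : R) :
  (forall n, closed_top_disk (D n)) ->
  (forall n, D n.+1 `<=` D n) ->
  0 < e ->
  exists N : nat, forall n : nat, (N <= n)%N ->
    forall U : set (R * R), component_of (D n `\` D n.+1) U -> thin e U.
Proof.
move=> disk nested e_gt0.
have D_mono n m : (n <= m)%N -> D m `<=` D n.
  move=> /subnKC <-; elim: (m - n)%N => [|k IH]; first by rewrite addn0.
  by rewrite addnS; apply: subset_trans (nested _) IH.
pose S n := [set x | D n x /\ forall y, round_ball x e y -> ~ D n.+1 y].
have [N HN] : exists N, forall n, (N <= n)%N -> S n = set0.
  apply: (compact_separated_levels (closed_top_disk_compact (disk 0%N)) e_gt0).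
  - by move=> n x [Dx _]; exact: D_mono Dx.
  - by move=> n m x y nm [_ miss] [Dy _] xy; exact: miss xy (D_mono _ _ nm _ Dy).
exists N => n Nn U [x0 _ ->] x Ux; apply: contrapT => no_exit.
suff : S n x by rewrite HN.
split=> [|y xy Dy]; first by have [] := connected_component_sub Ux.
apply: no_exit; exists y; split=> //.
by move=> /connected_component_sub[_]; apply.
Qed.
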